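(* Let $1\leq k\leq n$. (1) Let $X$ be an $(n,k)$ right Gog trapezoid. Among all Gog triangles of size $n$ whose entries with $i-j\leq k-1$ coincide with $X$, there is an entrywise smallest one, and it satisfies $X_{i,j}=j$ for $i\geq j+k$. (2) Let $X$ be an $(n,k)$ left Gog trapezoid. Among all Gog triangles of size $n$ whose entries with $j\leq k$ coincide with $X$, there is an entrywise smallest one, and it satisfies, for $j\geq k$, $$X_{i,j}=\max\big(X_{i,k}+j-k,\ X_{i-1,k}+j-k-1,\ \dots,\ X_{i-j+k,k}\big).$$
   Context: A Gelfand–Tsetlin triangle of size $n$ is an array $X=(X_{i,j})_{n\geq i\geq j\geq 1}$ of positive integers (row $n$ is the top row, row $1$ the bottom) with $X_{i+1,j}\leq X_{i,j}\leq X_{i+1,j+1}$ for all $n-1\geq i\geq j\geq 1$. A Gog triangle of size $n$ is a Gelfand–Tsetlin triangle with strictly increasing rows and top row $X_{n,j}=j$, $1\leq j\leq n$. Triangles are ordered entrywise. An $(n,k)$ right Gog trapezoid is the array $(X_{i,j})_{n\geq i\geq j\geq 1,\ i-j\leq k-1}$ of entries of some Gog triangle of size $n$ lying in its $k$ rightmost SW–NE diagonals; an $(n,k)$ left Gog trapezoid is the array $(X_{i,j})_{n\geq i\geq j\geq 1,\ j\leq k}$ of entries of some Gog triangle of size $n$ lying in its $k$ leftmost NW–SE diagonals. *)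

From mathcomp Require Import all_boot.
Set Implicit Arguments. Unset Strict Implicit. Unset Printing Implicit Defensive.

(* A triangular array of size n is represented by a function X : nat -> nat -> nat;
   only the entries X i j with 1 <= j <= i <= n are meaningful
   (row n is the top row, row 1 the bottom). *)
Definition tarray := nat -> nat -> nat.

Definition in_tri (n i j : nat) : bool := (1 <= j) && (j <= i) && (i <= n).

Definition GT_triangle (n : nat) (X : tarray) : Prop :=
  (forall i j, in_tri n i j -> 0 < X i j) /\
  (forall i j, 1 <= j -> j <= i -> i <= n - 1 ->
      X i.+1 j <= X i j /\ X i j <= X i.+1 j.+1).

Definition Gog_triangle (n : nat) (X : tarray) : Prop :=
  GT_triangle n X /\
  (forall i j, 1 <= j -> j < i -> i <= n -> X i j < X i j.+1) /\
  (forall j, 1 <= j -> j <= n -> X n j = j).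

Definition in_right (n k i j : nat) : bool := in_tri n i j && (i - j <= k - 1).
Definition in_left (n k i j : nat) : bool := in_tri n i j && (j <= k).

Definition agree_on (D : nat -> nat -> bool) (X Y : tarray) : Prop :=
  forall i j, D i j -> X i j = Y i j.

Definition right_Gog_trapezoid (n k : nat) (X : tarray) : Prop :=
  exists T, Gog_triangle n T /\ agree_on (in_right n k) X T.
Definition left_Gog_trapezoid (n k : nat) (X : tarray) : Prop :=
  exists T, Gog_triangle n T /\ agree_on (in_left n k) X T.

Definition smallest_Gog_ext (n : nat) (D : nat -> nat -> bool) (X Y : tarray) : Prop :=
  Gog_triangle n Y /\ agree_on D X Y /\
  (forall Z, Gog_triangle n Z -> agree_on D X Z ->
     forall i j, in_tri n i j -> Y i j <= Z i j).

(* Rows of a Gog triangle Z increase strictly and its SW-NE diagonals weakly,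
   so Z i j >= j and Z i j >= Z (i - l) (j - l) >= Z (i - l) k + (j - k - l).
   Filling the free entries with these lower bounds (j on the right, the
   maximum over l on the left) therefore gives the smallest candidate, and it
   is itself a Gog triangle: in the left case each term of the maximum already
   satisfies the interlacing and row inequalities, so their maximum does too. *)

From mathcomp Require Import all_boot zify.

Lemma in_triP n i j : reflect [/\ 1 <= j, j <= i & i <= n] (in_tri n i j).
Proof. by rewrite /in_tri -andbA; apply: and3P. Qed.

Lemma smallest_Gog_ext_agree n D X T Y :
  agree_on D X T -> smallest_Gog_ext n D T Y -> smallest_Gog_ext n D X Y.
Proof.
move=> XT [GY [TY minY]]; split; [done | split].
- by move=> i j Dij; rewrite XT // TY.
- by move=> Z GZ XZ; apply: minY => // i j Dij; rewrite -XT // XZ.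
Qed.

Section GogTriangle.

Context {n : nat} {T : tarray} (GT : Gog_triangle n T).

Lemma Gog_row_gap i a b : 1 <= a -> a <= b -> b <= i -> i <= n ->
  T i a + (b - a) <= T i b.
Proof.
have [_ [row _]] := GT; move=> a_gt0; elim: b => [|b IHb] leab lebi lein; first by lia.
case: (ltngtP a b.+1) => [ltab | | <-]; [ | lia | by rewrite subnn addn0].
by have := IHb ltac:(lia) ltac:(lia) lein; have := row i b; lia.
Qed.

Lemma Gog_ge_col i j : in_tri n i j -> j <= T i j.
Proof.
case/in_triP=> j_gt0 leji lein; have [[pos _] _] := GT.
have := Gog_row_gap i 1 j (leqnn 1) j_gt0 leji lein.
by have := pos i 1 ltac:(apply/in_triP; split; lia); lia.
Qed.

Lemma Gog_diag_mono i j l : l < j -> j <= i -> i <= n -> T (i - l) (j - l) <= T i j.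
Proof.
have [[_ inter] _] := GT; elim: l => [|l IHl] ltlj leji lein; first by rewrite !subn0.
case: (inter (i - l.+1) (j - l.+1) ltac:(lia) ltac:(lia) ltac:(lia)) => _.
have [-> ->] : (i - l.+1).+1 = i - l /\ (j - l.+1).+1 = j - l by lia.
by move/leq_trans; apply; apply: IHl (ltnW ltlj) leji lein.
Qed.

End GogTriangle.

Definition right_fill (k : nat) (T : tarray) : tarray :=
  fun i j => if i - j <= k - 1 then T i j else j.

Section RightFill.

Context {n k : nat} {T : tarray} (GT : Gog_triangle n T).

Lemma Gog_right_fill : Gog_triangle n (right_fill k T).
Proof.
have [[pos inter] [row top]] := GT.
have ge_col i j : 1 <= j -> j <= i -> i <= n -> j <= T i j.
  by move=> *; apply: (Gog_ge_col GT); apply/in_triP.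
rewrite /right_fill; split; [split | split].
- move=> i j /[dup] /in_triP[j_gt0 _ _] /pos; by case: ifP.
- move=> i j j_gt0 leji lein; have := inter i j j_gt0 leji lein.
  have := ge_col i j j_gt0 leji ltac:(lia).
  have := ge_col i.+1 j.+1 ltac:(lia) ltac:(lia) ltac:(lia).
  by rewrite subSS; case: (leqP (i - j) (k - 1)); case: ifP; lia.
- move=> i j j_gt0 ltji lein; have := row i j j_gt0 ltji lein.
  have := ge_col i j.+1 ltac:(lia) ltji lein.
  by case: ifP; case: ifP; lia.
- by move=> j j_gt0 lejn; case: ifP => // _; apply: top.
Qed.

Lemma right_fill_agree : agree_on (in_right n k) T (right_fill k T).
Proof. by move=> i j /andP[_ diag_ij]; rewrite /right_fill diag_ij. Qed.

Lemma right_fill_min Z : Gog_triangle n Z -> agree_on (in_right n k) T Z ->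
  forall i j, in_tri n i j -> right_fill k T i j <= Z i j.
Proof.
move=> GZ TZ i j Iij; rewrite /right_fill; case: ifP => diag_ij.
- by rewrite TZ // /in_right Iij diag_ij.
- exact: Gog_ge_col GZ i j Iij.
Qed.

Lemma right_fill_smallest : smallest_Gog_ext n (in_right n k) T (right_fill k T).
Proof. split; [exact: Gog_right_fill | split; [exact: right_fill_agree | exact: right_fill_min]]. Qed.

End RightFill.

Definition left_max (k : nat) (T : tarray) (i j : nat) : nat :=
  \max_(l < (j - k).+1) (T (i - l) k + (j - k - l)).

Definition left_fill (k : nat) (T : tarray) : tarray :=
  fun i j => if j < k then T i j else left_max k T i j.

Section LeftMax.

Context {k : nat} {T : tarray}.

Lemma left_max_ge i j l : l <= j - k -> T (i - l) k + (j - k - l) <= left_max k T i j.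
Proof. by move=> lelj; apply: (leq_bigmax (Ordinal (lelj : l < (j - k).+1))). Qed.

Lemma left_max_le i j m :
  (forall l, l <= j - k -> T (i - l) k + (j - k - l) <= m) -> left_max k T i j <= m.
Proof. by move=> bound; apply/bigmax_leqP => l _; apply: bound; rewrite -ltnS. Qed.

Lemma left_max_base i : left_max k T i k = T i k.
Proof. by rewrite /left_max subnn big_ord1 subn0 addn0. Qed.

Lemma left_max_ge_head i j : T i k + (j - k) <= left_max k T i j.
Proof. by have := left_max_ge i j 0 (leq0n _); rewrite !subn0. Qed.

Lemma left_max_lt_succ i j : k <= j -> left_max k T i j < left_max k T i j.+1.
Proof.
move=> lekj; have [l ->] : {l : 'I_(j - k).+1 | left_max k T i j = T (i - l) k + (j - k - l)}.
  by apply: eq_bigmax; rewrite card_ord.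
by have := left_max_ge i j.+1 l (_ : l <= j.+1 - k); have := ltn_ord l; lia.
Qed.

Lemma left_max_le_diag i j : k <= j -> left_max k T i j <= left_max k T i.+1 j.+1.
Proof.
move=> lekj; apply: left_max_le => l lelj.
by have := left_max_ge i.+1 j.+1 l.+1 (_ : l.+1 <= j.+1 - k); rewrite subSS; lia.
Qed.

Lemma left_fill_le i j : j <= k -> left_fill k T i j = T i j.
Proof.
rewrite /left_fill leq_eqVlt => /orP[/eqP-> | -> //].
by rewrite ltnn left_max_base.
Qed.

Lemma left_fill_ge i j : k <= j -> left_fill k T i j = left_max k T i j.
Proof. by move=> lekj; rewrite /left_fill ltnNge lekj. Qed.

End LeftMax.

Section LeftFill.

Context {n k : nat} {T : tarray} (GT : Gog_triangle n T).
Hypothesis k_gt0 : 0 < k.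

Lemma left_max_le_Gog Z : Gog_triangle n Z -> agree_on (in_left n k) T Z ->
  forall i j, k <= j -> j <= i -> i <= n -> left_max k T i j <= Z i j.
Proof.
move=> GZ TZ i j lekj leji lein; apply: left_max_le => l lelj.
rewrite TZ; last by rewrite /in_left leqnn andbT; apply/in_triP; split; lia.
have := Gog_row_gap GZ (i - l) k (j - l) k_gt0 ltac:(lia) ltac:(lia) ltac:(lia).
have := Gog_diag_mono GZ i j l ltac:(lia) leji lein.
lia.
Qed.

Lemma left_max_le_down i j : k <= j -> j <= i -> i <= n - 1 ->
  left_max k T i.+1 j <= left_max k T i j.
Proof.
have [[_ inter] _] := GT; move=> lekj leji lein; apply: left_max_le => l lelj.
have [down _] := inter (i - l) k k_gt0 ltac:(lia) ltac:(lia).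
have := left_max_ge (T := T) i j l lelj; rewrite subSn; lia.
Qed.

Lemma Gog_left_fill : Gog_triangle n (left_fill k T).
Proof.
have [[pos inter] [row top]] := GT.
split; [split | split].
- move=> i j Iij; case: (leqP j k) => [lejk | /ltnW lekj]; first by rewrite left_fill_le ?pos.
  have [_ leji lein] := elimT (in_triP _ _ _) Iij.
  have := pos i k ltac:(apply/in_triP; split; lia).
  by have := left_max_ge_head (k := k) (T := T) i j; rewrite left_fill_ge //; lia.
- move=> i j j_gt0 leji lein; case: (leqP j.+1 k) => [ltjk | /[!ltnS] lekj].
  + by rewrite !left_fill_le ?(ltnW ltjk) //; apply: inter.
  + rewrite !left_fill_ge ?(leqW lekj) //; split; first exact: left_max_le_down.
    exact: left_max_le_diag.
- move=> i j j_gt0 ltji lein; case: (leqP j.+1 k) => [ltjk | /[!ltnS] lekj].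
  + by rewrite !left_fill_le ?(ltnW ltjk) //; apply: row.
  + by rewrite !left_fill_ge ?(leqW lekj) //; apply: left_max_lt_succ.
- move=> j j_gt0 lejn; case: (leqP j k) => [lejk | /ltnW lekj]; first by rewrite left_fill_le ?top.
  have lekn : k <= n := leq_trans lekj lejn.
  rewrite left_fill_ge //; apply/anti_leq/andP; split.
  + rewrite -{2}(top j) //.
    exact: left_max_le_Gog T GT (fun _ _ _ => erefl) n j lekj lejn (leqnn n).
  + by have := left_max_ge_head (k := k) (T := T) n j; rewrite top // subnKC.
Qed.

Lemma left_fill_agree : agree_on (in_left n k) T (left_fill k T).
Proof. by move=> i j /andP[_ lejk]; rewrite left_fill_le. Qed.

Lemma left_fill_min Z : Gog_triangle n Z -> agree_on (in_left n k) T Z ->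
  forall i j, in_tri n i j -> left_fill k T i j <= Z i j.
Proof.
move=> GZ TZ i j Iij; have [_ leji lein] := elimT (in_triP _ _ _) Iij.
case: (leqP j k) => [lejk | /ltnW lekj].
- by rewrite left_fill_le // TZ // /in_left Iij lejk.
- by rewrite left_fill_ge //; apply: left_max_le_Gog.
Qed.

Lemma left_fill_smallest : smallest_Gog_ext n (in_left n k) T (left_fill k T).
Proof. split; [exact: Gog_left_fill | split; [exact: left_fill_agree | exact: left_fill_min]]. Qed.

End LeftFill.

Theorem mainTheorem6 (n k : nat) (hk1 : 1 <= k) (hkn : k <= n) :
  (forall X : tarray, right_Gog_trapezoid n k X ->
     exists Y : tarray, smallest_Gog_ext n (in_right n k) X Y /\
       (forall i j, in_tri n i j -> j + k <= i -> Y i j = j)) /\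
  (forall X : tarray, left_Gog_trapezoid n k X ->
     exists Y : tarray, smallest_Gog_ext n (in_left n k) X Y /\
       (forall i j, in_tri n i j -> k <= j ->
          Y i j = \max_(l < (j - k).+1) (X (i - l) k + (j - k - l)))).
Proof.
split=> X [T [GT XT]].
- exists (right_fill k T); split.
    exact: smallest_Gog_ext_agree XT (right_fill_smallest GT).
  by move=> i j _ diag_ij; rewrite /right_fill leqNgt ifF //; apply/negbF; lia.
- exists (left_fill k T); split.
    exact: smallest_Gog_ext_agree XT (left_fill_smallest GT hk1).
  move=> i j /in_triP[_ leji lein] lekj; rewrite left_fill_ge //.
  apply: eq_bigr => l _; rewrite XT // /in_left leqnn andbT.
  by apply/in_triP; have := ltn_ord l; split; lia.
Qed.
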